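(* Let $X,Y$ be reflexive Banach spaces, $\varphi:X\times Y\to\mathbb{R}\cup\{+\infty\}$ a proper convex lower semicontinuous function with $(0,0)\in{\rm dom}(\varphi)$ and $\lim_{\|x\|+\|y\|\to\infty}\frac{\varphi(x,y)}{\|x\|+\|y\|}=+\infty$, $A:X\to Y^*$ a bounded linear operator, and $B_1:X\to X^*$, $B_2:Y\to Y^*$ bounded linear skew-adjoint operators. Then the functional $$I(x,y)=\varphi(x,y)+\varphi^*(-A^*y+B_1x,\ Ax+B_2y)$$ has infimum $0$ on $X\times Y$, attained at some $(\bar x,\bar y)$, and $$(-A^*\bar y+B_1\bar x,\ A\bar x+B_2\bar y)\in\partial\varphi(\bar x,\bar y).$$
   Context: $\varphi^*$ is the Legendre conjugate of $\varphi$ on $X^*\times Y^*$; $\partial\varphi$ is the convex subdifferential. *)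

From HB Require Import structures.
From mathcomp Require Import all_boot all_order all_algebra.
From mathcomp Require Import all_classical all_reals all_analysis.
Set Implicit Arguments. Unset Strict Implicit. Unset Printing Implicit Defensive.
Import Order.TTheory GRing.Theory Num.Theory.
Import numFieldNormedType.Exports.
Local Open Scope classical_set_scope.
Local Open Scope ring_scope.

(* Elements of the topological dual X^* are represented as continuous linear
   functionals X -> R. *)
Definition is_dual (R : realType) (X : normedModType R) (f : X -> R) :=
  (forall (a : R) (u v : X), f (a *: u + v) = a * f u + f v) /\ continuous f.

(* Reflexivity: every bounded linear functional on X^* (with the dual norm
   ||f|| = sup_{||x||<=1} |f x|) is the evaluation at some x in X.
   "|Phi f| <= C * M for every M bounding f on the unit ball" is
   |Phi f| <= C * ||f||. *)
Definition reflexive_space (R : realType) (X : normedModType R) :=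
  forall Phi : (X -> R) -> R,
    (forall (a : R) (f g : X -> R), is_dual f -> is_dual g ->
        Phi (fun x => a * f x + g x) = a * Phi f + Phi g) ->
    (exists C : R, forall f : X -> R, is_dual f ->
        forall M : R, (forall x : X, `|x| <= 1 -> `|f x| <= M) ->
        `|Phi f| <= C * M) ->
    exists x : X, forall f : X -> R, is_dual f -> Phi f = f x.

(* A bounded linear operator A : X -> Y^* is represented by the bounded
   bilinear form a x y = <A x, y>. *)
Definition bounded_bilinear (R : realType) (X Y : normedModType R)
    (a : X -> Y -> R) :=
  (forall (c : R) (x1 x2 : X) (y : Y), a (c *: x1 + x2) y = c * a x1 y + a x2 y) /\
  (forall (c : R) (x : X) (y1 y2 : Y), a x (c *: y1 + y2) = c * a x y1 + a x y2) /\
  (exists C : R, forall x y, `|a x y| <= C * `|x| * `|y|).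

(* B : X -> X^* bounded linear skew-adjoint, via b x x' = <B x, x'>:
   B^* = -B, i.e. <B x, x'> = - <B x', x>. *)
Definition skew_adjoint (R : realType) (X : normedModType R) (b : X -> X -> R) :=
  bounded_bilinear b /\ forall x x' : X, b x x' = - b x' x.

Local Open Scope ereal_scope.

Definition convex_XY (R : realType) (X Y : normedModType R)
    (phi : X * Y -> \bar R) :=
  forall (t : R) (p q : X * Y), (0 <= t <= 1)%R ->
    phi ((t *: p.1 + (1 - t) *: q.1)%R, (t *: p.2 + (1 - t) *: q.2)%R)
      <= t%:E * phi p + (1 - t)%:E * phi q.

Definition conjugate (R : realType) (X Y : normedModType R)
    (phi : X * Y -> \bar R) (f : X -> R) (g : Y -> R) : \bar R :=
  ereal_sup [set (f p.1 + g p.2)%:E - phi p | p in [set: X * Y]].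

Definition in_subdiff (R : realType) (X Y : normedModType R)
    (phi : X * Y -> \bar R) (p : X * Y) (f : X -> R) (g : Y -> R) :=
  phi p \is a fin_num /\
  forall q : X * Y, phi p + (f (q.1 - p.1)%R + g (q.2 - p.2)%R)%:E <= phi q.

From HB Require Import structures.
From mathcomp Require Import all_boot all_order all_algebra.
From mathcomp Require Import all_classical all_reals all_analysis.
From mathcomp Require Import ring lra.
Import Order.TTheory GRing.Theory Num.Theory.
Import numFieldNormedType.Exports.
Local Open Scope classical_set_scope.
Local Open Scope ring_scope.
Set Implicit Arguments. Unset Strict Implicit. Unset Printing Implicit Defensive.

(* The form [coupling p q], pairing (-A^* y + B1 x, A x + B2 y) with q for p = (x, y), is
   bilinear and, by skew-adjointness, vanishes on the diagonal. Hence I >= 0 by the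
   Fenchel-Young inequality, and it suffices to find an equilibrium point pb, i.e. one with
   phi pb + coupling pb q <= phi q for every q: then I pb = 0 and the pairing at pb is a
   subgradient of phi at pb.
   The equilibrium is obtained as in Ky Fan's minimax inequality. For finitely many test points
   q_i, a Hahn-Banach separation in R^n together with Jensen's inequality gives points p with
   phi p + coupling p q_i - phi q_i < eps for all i; coercivity keeps them bounded. An
   ultrafilter refining these finite approximations converges weakly in the reflexive space
   X * Y, and the convex lower semicontinuous functions phi + coupling(., q), being weakly
   lower semicontinuous, pass the inequalities to the weak limit. *)

Section ScalarForms.
Variables (R : realType) (V : lmodType R) (f : V -> R).
Hypothesis f_scalar : scalar f.

Lemma scalar_formB u v : f (u - v) = f u - f v.
Proof. by rewrite -scaleN1r addrC f_scalar mulN1r addrC. Qed.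

Lemma scalar_form0 : f 0 = 0.
Proof. by rewrite -(subrr 0) scalar_formB subrr. Qed.

Lemma scalar_formN u : f (- u) = - f u.
Proof. by rewrite -[- u]sub0r scalar_formB scalar_form0 sub0r. Qed.

Lemma scalar_formD u v : f (u + v) = f u + f v.
Proof. by rewrite -[v in LHS]opprK scalar_formB scalar_formN opprK. Qed.

Lemma scalar_formZ a u : f (a *: u) = a * f u.
Proof. by rewrite -[a *: u]addr0 f_scalar scalar_form0 addr0. Qed.

Lemma scalar_form_sum n (F : 'I_n -> V) : f (\sum_(i < n) F i) = \sum_(i < n) f (F i).
Proof. by elim/big_rec2: _ => [|i y1 y2 _ <-]; [exact: scalar_form0|exact: scalar_formD]. Qed.

End ScalarForms.

Section HahnBanach.
Variables (R : realType) (V : lmodType R) (p : V -> R).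
Hypothesis p_subadd : forall u v, p (u + v) <= p u + p v.
Hypothesis p_homo : forall t v, 0 < t -> p (t *: v) = t * p v.

Lemma sublinear0 : p 0 = 0.
Proof. by have := p_homo 0 (ltr0n R 2); rewrite scaler0 => h; lra. Qed.

(* Partial linear functionals dominated by [p], encoded by their graphs. *)
Definition dominated_graph (G : set (V * R)) := [/\ G (0, 0),
  (forall a u x v y, G (u, x) -> G (v, y) -> G (a *: u + v, a * x + y)),
  (forall u x y, G (u, x) -> G (u, y) -> x = y) &
  (forall u x, G (u, x) -> x <= p u)].

Section OneStepExtension.
Variables (G : set (V * R)) (v : V).
Hypothesis G_dominated : dominated_graph G.

(* Sublinearity puts every [x - p (u - v)] below every [p (u' + v) - x']; any [c] in between
   is an admissible value at [v]. *)
Lemma dominated_graph_gap : exists c,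
  (forall u x, G (u, x) -> x - p (u - v) <= c) /\
  (forall u x, G (u, x) -> c <= p (u + v) - x).
Proof.
have [G00 G_lin _ G_le] := G_dominated.
pose E := [set r | exists u x, G (u, x) /\ r = x - p (u - v)].
have E_ub u' x' : G (u', x') -> ubound E (p (u' + v) - x').
  move=> Gu' _ [u [x [Gu ->]]].
  have := G_le _ _ (G_lin 1 u x u' x' Gu Gu'); rewrite scale1r mul1r.
  have := p_subadd (u - v) (u' + v).
  by rewrite addrCA subrK [u' + u]addrC; lra.
have E_sup : has_sup E.
  by split; [exists (0 - p (0 - v)); exists 0, 0|exists (p (0 + v) - 0); exact: E_ub].
exists (sup E); split => [u x Gu|u' x' Gu'].
  by apply: sup_upper_bound => //; exists u, x.
by apply: ge_sup => //; [case: E_sup|exact: E_ub].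
Qed.

Definition graph_ext (c : R) : set (V * R) :=
  [set ux | exists u x t, G (u, x) /\ ux = (u + t *: v, x + t * c)].

Lemma graph_ext_sub c : G `<=` graph_ext c.
Proof. by move=> [u x] Gu; exists u, x, 0; rewrite scale0r addr0 mul0r addr0. Qed.

Lemma graph_ext_new c : graph_ext c (v, c).
Proof. by exists 0, 0, 1; rewrite scale1r add0r mul1r add0r; case: G_dominated. Qed.

Hypothesis v_new : forall x, ~ G (v, x).

Lemma graph_ext_functional c u x y : graph_ext c (u, x) -> graph_ext c (u, y) -> x = y.
Proof.
have [G00 G_lin G_fun _] := G_dominated.
move=> [u1 [x1 [t1 [Gu1 [e1 ->]]]]] [u2 [x2 [t2 [Gu2 [e2 ->]]]]].
have e : u1 + t1 *: v = u2 + t2 *: v by rewrite -e1 -e2.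
have [t12|t12] := eqVneq t1 t2.
  have eu : u1 = u2 by apply: (addIr (t1 *: v)); rewrite e t12.
  by rewrite eu in Gu1; rewrite t12 (G_fun _ _ _ Gu1 Gu2).
case: (@v_new ((t1 - t2)^-1 * (x2 - x1))).
have -> : v = (t1 - t2)^-1 *: (u2 - u1).
  apply: (@scalerI _ _ (t1 - t2)); first by rewrite subr_eq0.
  rewrite scalerA mulfV ?subr_eq0 // scale1r scalerBl.
  by rewrite -[u2](addrK (t2 *: v)) -e addrAC [u1 + _]addrC addrK.
have := G_lin ((t1 - t2)^-1) (u2 - u1) (x2 - x1) 0 0 _ G00; rewrite !addr0; apply.
by have := G_lin (-1) u1 x1 u2 x2 Gu1 Gu2; rewrite scaleN1r mulN1r addrC [- x1 + _]addrC.
Qed.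

Lemma graph_ext_dominated c :
  (forall u x, G (u, x) -> x - p (u - v) <= c) ->
  (forall u x, G (u, x) -> c <= p (u + v) - x) ->
  dominated_graph (graph_ext c).
Proof.
have [G00 G_lin _ G_le] := G_dominated.
move=> c_ge c_le; split.
- exact: graph_ext_sub.
- move=> a _ _ _ _ [u [x [t [Gu [-> ->]]]]] [u' [x' [t' [Gu' [-> ->]]]]].
  exists (a *: u + u'), (a * x + x'), (a * t + t'); split; first exact: G_lin.
  congr pair; last by ring.
  by rewrite scalerDr scalerDl scalerA -!addrA; congr (_ + _); rewrite addrCA.
- exact: graph_ext_functional.
- move=> _ _ [u [x [t [Gu [-> ->]]]]].
  have [t0|t0|->] := ltgtP t 0; last by rewrite scale0r addr0 mul0r addr0; exact: G_le.
  + have s0 : 0 < - t by rewrite oppr_gt0.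
    have := c_ge _ _ (G_lin (- t)^-1 u x 0 0 Gu G00); rewrite !addr0 => h.
    have -> : u + t *: v = - t *: ((- t)^-1 *: u - v).
      by rewrite scalerBr scalerA mulfV ?gt_eqF // scale1r scaleNr opprK.
    rewrite p_homo //.
    have : - t * ((- t)^-1 * x - p ((- t)^-1 *: u - v)) <= - t * c by rewrite ler_pM2l.
    rewrite mulrBr mulrA mulfV ?gt_eqF // mul1r; lra.
  + have := c_le _ _ (G_lin t^-1 u x 0 0 Gu G00); rewrite !addr0 => h.
    have -> : u + t *: v = t *: (t^-1 *: u + v).
      by rewrite scalerDr scalerA mulfV ?gt_eqF // scale1r.
    rewrite p_homo //.
    have : t * c <= t * (p (t^-1 *: u + v) - t^-1 * x) by rewrite ler_pM2l.
    rewrite mulrBr mulrA mulfV ?gt_eqF // mul1r; lra.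
Qed.

End OneStepExtension.

Lemma dominated_graph_chain (G0 : set (V * R)) (F : set (set (V * R))) :
  (forall G, F G -> dominated_graph (G0 `|` G)) -> total_on F subset ->
  dominated_graph G0 -> dominated_graph (G0 `|` \bigcup_(G in F) G).
Proof.
move=> F_dom F_chain G0_dom.
have cover e1 e2 : (G0 `|` \bigcup_(G in F) G) e1 -> (G0 `|` \bigcup_(G in F) G) e2 ->
    exists H, [/\ dominated_graph H, H e1, H e2 & H `<=` G0 `|` \bigcup_(G in F) G].
  have sub G : F G -> G0 `|` G `<=` G0 `|` \bigcup_(G in F) G.
    by move=> FG e [?|?]; [left|right; exists G].
  move=> [h1|[G1 FG1 h1]] [h2|[G2 FG2 h2]].
  - by exists G0; split => // e ?; left.
  - by exists (G0 `|` G2); split; [exact: F_dom|left|right|exact: sub].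
  - by exists (G0 `|` G1); split; [exact: F_dom|right|left|exact: sub].
  - have [s12|s21] := F_chain _ _ FG1 FG2.
    + by exists (G0 `|` G2); split; [exact: F_dom|right; exact: s12|right|exact: sub].
    + by exists (G0 `|` G1); split; [exact: F_dom|right|right; exact: s21|exact: sub].
split.
- by left; case: G0_dom.
- move=> a u x v y h1 h2; have [H [[_ H_lin _ _] H1 H2 HS]] := cover _ _ h1 h2.
  exact/HS/H_lin.
- move=> u x y h1 h2; have [H [[_ _ H_fun _] H1 H2 _]] := cover _ _ h1 h2.
  exact: H_fun H1 H2.
- move=> u x h; have [H [[_ _ _ H_le] H1 _ _]] := cover _ _ h h.
  exact: H_le H1.
Qed.

Lemma dominated_graph_total (G0 : set (V * R)) : dominated_graph G0 ->
  exists2 M, dominated_graph M & G0 `<=` M /\ forall v, exists x, M (v, x).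
Proof.
move=> G0_dom.
(* Zorn is applied to the graphs [G0 `|` A] so that the empty chain is harmless. *)
have [A [A_dom A_max]] : exists A, dominated_graph (G0 `|` A) /\
    forall B, A `<` B -> ~ dominated_graph (G0 `|` B).
  by apply: Zorn_bigcup => F F_dom F_chain; exact: dominated_graph_chain.
exists (G0 `|` A) => //; split=> [e|v]; first by left.
apply: contrapT => v_dom; have v_new x : ~ (G0 `|` A) (v, x) by move=> h; apply: v_dom; exists x.
have [c [c_ge c_le]] := dominated_graph_gap v A_dom.
have sub : G0 `|` A `<=` graph_ext (G0 `|` A) v c by exact: graph_ext_sub.
apply: (A_max (graph_ext (G0 `|` A) v c)).
  split=> [e Ae|sub']; first by apply: sub; right.
  by apply: (v_new c); right; apply: sub'; exact: graph_ext_new.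
rewrite setUidr; last by move=> e G0e; apply: sub; left.
exact: graph_ext_dominated.
Qed.

Lemma hahn_banach_line (z : V) : (forall t, t <= p (t *: z)) ->
  exists f : V -> R, [/\ scalar f, f z = 1 & forall v, f v <= p v].
Proof.
move=> pz.
have z0 : z != 0 by apply/eqP => z0; have := pz 1; rewrite z0 scaler0 sublinear0; lra.
pose G0 := [set vx | exists t, vx = (t *: z, t)].
have G0_dom : dominated_graph G0.
  split.
  - by exists 0; rewrite scale0r.
  - move=> a u x v y [t [-> ->]] [s [-> ->]]; exists (a * t + s).
    by rewrite scalerDl scalerA.
  - move=> u x y [t [-> ->]] [s [e ->]]; apply/eqP; rewrite -subr_eq0.
    have : (t - s) *: z = 0 by rewrite scalerBl e subrr.
    by move/eqP; rewrite scaler_eq0 (negbTE z0) orbF.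
  - by move=> u x [t [-> ->]].
have [M [_ M_lin M_fun M_le] [G0M M_tot]] := dominated_graph_total G0_dom.
have [f Mf] := choice M_tot.
exists f; split => [a u v||v]; last exact: M_le.
- by apply: (M_fun (a *: u + v)); [exact: Mf|exact: M_lin].
- by apply: M_fun (Mf z) _; apply: G0M; exists 1; rewrite scale1r.
Qed.

End HahnBanach.

Definition is_convex (R : realType) (V : lmodType R) (U : set V) :=
  forall u v (t : R), 0 <= t <= 1 -> U u -> U v -> U (t *: u + (1 - t) *: v).

Definition algebraically_open (R : realType) (V : lmodType R) (U : set V) :=
  forall u w, U u -> exists2 d : R, 0 < d & U (u + d *: w).

Section MinkowskiGauge.
Variables (R : realType) (V : lmodType R) (U : set V) (u0 : V).
Hypotheses (U_convex : is_convex U) (U_open : algebraically_open U) (U_u0 : U u0).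

Definition gauge_set v := [set t : R | 0 < t /\ U (u0 + t^-1 *: v)].

Definition gauge v := inf (gauge_set v).

Lemma gauge_set_neq0 v : gauge_set v !=set0.
Proof.
have [d d0 Ud] := U_open v U_u0.
by exists d^-1; split; [rewrite invr_gt0|rewrite invrK].
Qed.

Lemma gauge_set_lbound v : has_lbound (gauge_set v).
Proof. by exists 0 => t [t0 _]; exact: ltW. Qed.

Lemma gauge_le v t : gauge_set v t -> gauge v <= t.
Proof. by move=> vt; apply: ge_inf => //; exact: gauge_set_lbound. Qed.

Lemma gauge_ge0 v : 0 <= gauge v.
Proof. by apply: lb_le_inf; [exact: gauge_set_neq0|move=> t [t0 _]; exact: ltW]. Qed.

Lemma gauge_setS v t s : gauge_set v t -> t <= s -> gauge_set v s.
Proof.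
move=> [t0 Ut] ts; have s0 : 0 < s by exact: lt_le_trans ts.
split => //; have ts1 : 0 <= t / s <= 1 by rewrite ler_pdivrMr // mul1r ts divr_ge0 ?ltW.
have := U_convex ts1 Ut U_u0.
rewrite scalerDr scalerA addrAC -scalerDl subrKC scale1r.
by rewrite mulrAC mulfV ?gt_eqF // mul1r.
Qed.

Lemma gauge_homo c v : 0 < c -> gauge (c *: v) = c * gauge v.
Proof.
have gauge_homo_le c' v' : 0 < c' -> gauge (c' *: v') <= c' * gauge v'.
  move=> c0; rewrite -ler_pdivrMl //; apply: lb_le_inf; first exact: gauge_set_neq0.
  move=> t [t0 Ut]; rewrite ler_pdivrMl //; apply: gauge_le; split; first exact: mulr_gt0.
  by rewrite scalerA invfM mulrAC mulVf ?gt_eqF // mul1r.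
move=> c0; apply/eqP; rewrite eq_le gauge_homo_le //=.
have := gauge_homo_le c^-1 (c *: v); rewrite invr_gt0 scalerA mulVf ?gt_eqF // scale1r.
by move=> /(_ c0); rewrite -ler_pdivlMl // invrK.
Qed.

Lemma gauge_subadd u v : gauge (u + v) <= gauge u + gauge v.
Proof.
have gauge_le_add s t : gauge_set u s -> gauge_set v t -> gauge (u + v) <= s + t.
  move=> [s0 Us] [t0 Ut]; have st0 : 0 < s + t by exact: addr_gt0.
  apply: gauge_le; split => //.
  have st1 : 0 <= s / (s + t) <= 1 by rewrite ler_pdivrMr // mul1r lerDl divr_ge0 ?ltW.
  have := U_convex st1 Us Ut.
  have -> : 1 - s / (s + t) = t / (s + t).
    by apply: (@mulIf _ (s + t)); rewrite ?gt_eqF // mulrBl !mulfVK ?gt_eqF // mul1r addrAC subrr add0r.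
  rewrite !scalerDr !scalerA addrACA -scalerDl -mulrDl divff ?gt_eqF // scale1r.
  by rewrite mulrAC mulfV ?gt_eqF // mul1r mulrAC mulfV ?gt_eqF // mul1r.
have : gauge (u + v) - gauge u <= gauge v.
  apply: lb_le_inf; first exact: gauge_set_neq0.
  move=> t vt; rewrite lerBlDr -lerBlDl.
  apply: lb_le_inf; first exact: gauge_set_neq0.
  by move=> s us; rewrite lerBlDr; exact: gauge_le_add.
lra.
Qed.

Lemma gauge_ge1 v : ~ U (u0 + v) -> 1 <= gauge v.
Proof.
move=> Uv; rewrite leNgt; apply/negP => /(inf_lt (gauge_set_neq0 v)) [s vs s1].
by have [_] := gauge_setS vs (ltW s1); rewrite invr1 scale1r.
Qed.

Lemma gauge_lt1 u : U u -> gauge (u - u0) < 1.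
Proof.
move=> Uu; have [d d0 Ud] := U_open (u - u0) Uu.
have vd : gauge_set (u - u0) (1 + d)^-1.
  split; first by rewrite invr_gt0 addr_gt0.
  by rewrite invrK scalerDl scale1r addrA [u0 + _]addrC subrK.
by apply: le_lt_trans (gauge_le vd) _; rewrite invf_lt1 ?addr_gt0 // ltrDl.
Qed.

End MinkowskiGauge.

(* Hahn-Banach extension, below the Minkowski gauge of [U] centred at [u0], of the linear form
   that is [1] at [x0 - u0]. *)
Lemma separation_open_convex (R : realType) (V : lmodType R) (U : set V) (u0 x0 : V) :
  is_convex U -> algebraically_open U -> U u0 -> ~ U x0 ->
  exists l : V -> R, [/\ scalar l, forall u, U u -> l u < l x0 &
                         forall v, l v <= gauge U u0 v].
Proof.
move=> U_convex U_open U_u0 U_x0.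
have g_line t : t <= gauge U u0 (t *: (x0 - u0)).
  have [t0|t0] := leP t 0; first exact: le_trans t0 (gauge_ge0 U_open U_u0 _).
  rewrite gauge_homo // -{1}[t]mulr1 ler_pM2l //.
  by apply: gauge_ge1 => //; rewrite addrC subrK.
have [l [l_lin l1 l_le]] := hahn_banach_line (gauge_subadd U_convex U_open U_u0)
  (gauge_homo U_open U_u0) g_line.
exists l; split => // u Uu.
have := le_lt_trans (l_le (u - u0)) (gauge_lt1 u0 U_open Uu).
by rewrite !scalar_formB // in l1 *; lra.
Qed.

Definition convex_on (R : realType) (V : lmodType R) (D : set V) (f : V -> R) :=
  forall u v (t : R), 0 <= t <= 1 -> D u -> D v ->
    f (t *: u + (1 - t) *: v) <= t * f u + (1 - t) * f v.

Lemma jensen (R : realType) (V : lmodType R) (D : set V) (f : V -> R) :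
  is_convex D -> convex_on D f ->
  forall n (lam : 'I_n -> R) (q : 'I_n -> V), (forall i, 0 <= lam i) ->
  \sum_(i < n) lam i = 1 -> (forall i, D (q i)) ->
  D (\sum_(i < n) lam i *: q i) /\
  f (\sum_(i < n) lam i *: q i) <= \sum_(i < n) lam i * f (q i).
Proof.
move=> D_convex f_convex; elim=> [|n IH] lam q lam0 lam1 Dq.
  by move: lam1; rewrite big_ord0 => /eqP; rewrite eq_sym oner_eq0.
move: lam1; rewrite !big_ord_recr /=; set a := lam ord_max => lam1.
set w := widen_ord (leqnSn n).
have [a1|a1] := eqVneq a 1.
  have lam_w0 : forall i, true -> lam (w i) = 0.
    by apply: psumr_eq0P => [j _|]; [exact: lam0|rewrite a1 in lam1; lra].
  rewrite big1 => [|i _]; last by rewrite lam_w0 // scale0r.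
  rewrite big1 => [|i _]; last by rewrite lam_w0 // mul0r.
  by rewrite !add0r a1 scale1r mul1r; split.
have sum_w0 : 0 <= \sum_(i < n) lam (w i) by apply: sumr_ge0.
pose s := 1 - a.
have sum_w : \sum_(i < n) lam (w i) = s by rewrite /s -lam1 addrK.
have s0 : 0 < s by rewrite /s subr_gt0 lt_neqAle a1 /=; lra.
have s1 : 0 <= s <= 1 by apply/andP; split; [exact: ltW|rewrite /s; have := lam0 ord_max; rewrite -/a; lra].
have [D2 f2] := IH (fun i => lam (w i) / s) (q \o w) (fun i => divr_ge0 (lam0 _) (ltW s0))
  ltac:(by rewrite -mulr_suml sum_w divff ?gt_eqF) (fun i => Dq _).
have -> : \sum_(i < n) lam (w i) *: q (w i) = s *: \sum_(i < n) (lam (w i) / s) *: q (w i).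
  by rewrite scaler_sumr; apply: eq_bigr => i _; rewrite scalerA mulrC divfK ?gt_eqF.
have -> : \sum_(i < n) lam (w i) * f (q (w i)) = s * \sum_(i < n) (lam (w i) / s) * f (q (w i)).
  by rewrite mulr_sumr; apply: eq_bigr => i _; rewrite mulrA [s * _]mulrC divfK ?gt_eqF.
have -> : a = 1 - s by rewrite /s opprB addrC subrK.
split; first exact: D_convex.
by apply: le_trans (f_convex _ _ _ s1 D2 (Dq _)) _; rewrite lerD2r ler_pM2l.
Qed.

Section FiniteEquilibrium.
Variables (R : realType) (Z : lmodType R) (D : set Z) (f : Z -> R) (L : Z -> Z -> R).
Hypotheses (D_convex : is_convex D) (f_convex : convex_on D f).
Hypotheses (L_scalarl : forall q, scalar (L ^~ q)) (L_scalarr : forall p, scalar (L p)).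
Hypothesis L_diag : forall p, L p p = 0.
Variables (n : nat) (q : 'I_n -> Z).
Hypothesis D_q : forall i, D (q i).

Definition excess i p := f p + L p (q i) - f (q i).

Definition excess_upper : set 'rV[R]_n :=
  [set v | exists p, exists2 d, 0 < d & D p /\ forall i, excess i p + d <= v 0 i].

Lemma excess_upper_convex : is_convex excess_upper.
Proof.
move=> u v t t01 [p [d d0 [Dp hp]]] [p' [d' d0' [Dp' hp']]].
case/andP: (t01) => t0 t1.
exists (t *: p + (1 - t) *: p'); exists (t * d + (1 - t) * d'); first by nra.
split => [|i]; first exact: D_convex.
have := f_convex t01 Dp Dp'; have := hp i; have := hp' i.
rewrite !mxE /excess (scalar_formD (L_scalarl _)) !(scalar_formZ (L_scalarl _)); nra.
Qed.

Lemma excess_upper_open : algebraically_open excess_upper.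
Proof.
move=> u w [p [d d0 [Dp hp]]].
pose K := 1 + \sum_(j < n) `|w 0 j|.
have K0 : 0 < K by rewrite ltr_pwDl ?sumr_ge0.
exists (d / 2 / K); first by rewrite !divr_gt0.
exists p; exists (d / 2); first by rewrite divr_gt0.
split => // i; rewrite !mxE.
have wK : `|w 0 i| <= K.
  rewrite /K (bigD1 i) //=.
  have : 0 <= \sum_(j < n | j != i) `|w 0 j| by rewrite sumr_ge0.
  lra.
have := ler_norm (- w 0 i); rewrite normrN => wn.
have : d / 2 / K * K = d / 2 by rewrite divfK ?gt_eqF.
have := hp i; nra.
Qed.

Lemma weighted_excess_nonpos (mu : 'I_n -> R) : (forall i, 0 <= mu i) ->
  0 < \sum_(i < n) mu i -> exists2 p, D p & \sum_(i < n) mu i * excess i p <= 0.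
Proof.
move=> mu0; set S := \sum_(i < n) mu i => S0.
have [Dp fp] := jensen D_convex f_convex (fun i => divr_ge0 (mu0 i) (ltW S0))
  ltac:(by rewrite -mulr_suml divff ?gt_eqF) D_q.
set p := \sum_(i < n) _ *: _ in Dp fp; exists p => //.
have L_p : \sum_(i < n) mu i * L p (q i) = 0.
  have -> : \sum_(i < n) mu i * L p (q i) = L p (S *: p).
    rewrite /p scaler_sumr (scalar_form_sum (L_scalarr p)); apply: eq_bigr => i _.
    by rewrite scalerA [S * _]mulrC divfK ?gt_eqF // (scalar_formZ (L_scalarr p)).
  by rewrite (scalar_formZ (L_scalarr p)) L_diag mulr0.
have S_f : S * \sum_(i < n) (mu i / S) * f (q i) = \sum_(i < n) mu i * f (q i).
  by rewrite mulr_sumr; apply: eq_bigr => i _; rewrite mulrA [S * _]mulrC divfK ?gt_eqF.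
have -> : \sum_(i < n) mu i * excess i p =
    S * f p + \sum_(i < n) mu i * L p (q i) - S * \sum_(i < n) (mu i / S) * f (q i).
  rewrite S_f /S mulr_suml -big_split -sumrB /=.
  by apply: eq_bigr => i _; rewrite /excess; ring.
by rewrite L_p addr0 subr_le0 ler_pM2l.
Qed.

Lemma excess_upper_weights (eps : R) : 0 < eps -> ~ excess_upper (\row_(i < n) eps) ->
  forall p0, D p0 -> exists mu : 'I_n -> R, (forall i, 0 <= mu i) /\
    forall p, D p -> 0 < \sum_(i < n) mu i * excess i p.
Proof.
move=> e0 x0_out p0 Dp0; set x0 := \row_(i < n) eps in x0_out.
set u0 := \row_(i < n) (excess i p0 + 1).
have U_u0 : excess_upper u0 by exists p0; exists 1 => //; split => // i; rewrite mxE.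
have [l [l_lin l_lt _]] := separation_open_convex excess_upper_convex excess_upper_open U_u0 x0_out.
pose mu i := - l (delta_mx 0 i).
have l_mu (v : 'rV_n) : l v = - \sum_(i < n) mu i * v 0 i.
  rewrite {1}(row_sum_delta v) (scalar_form_sum l_lin) -sumrN.
  by apply: eq_bigr => i _; rewrite (scalar_formZ l_lin) /mu mulNr opprK mulrC.
have mu0 i : 0 <= mu i.
  rewrite /mu oppr_ge0 leNgt; apply/negP => li.
  pose t := (l x0 - l u0) / l (delta_mx 0 i).
  have t0 : 0 < t by rewrite divr_gt0 // subr_gt0 l_lt.
  have U_t : excess_upper (u0 + t *: delta_mx 0 i).
    exists p0; exists 1 => //; split => // j; rewrite !mxE lerDl.
    by apply: mulr_ge0; [exact: ltW|exact: ler0n].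
  have := l_lt _ U_t; rewrite (scalar_formD l_lin) (scalar_formZ l_lin) /t divfK ?gt_eqF //; lra.
exists mu; split => // p Dp.
have U_p : excess_upper (\row_(i < n) (excess i p + eps / 2)).
  by exists p; exists (eps / 2); [rewrite divr_gt0|split => // j; rewrite mxE].
have := l_lt _ U_p; rewrite !l_mu ltrN2 -subr_gt0 -sumrB.
have -> : \sum_(i < n) (mu i * (\row_j (excess j p + eps / 2)) 0 i - mu i * x0 0 i) =
    \sum_(i < n) mu i * excess i p - \sum_(i < n) mu i * (eps / 2).
  by rewrite -sumrB; apply: eq_bigr => i _; rewrite /x0 !mxE; field.
rewrite subr_gt0; apply: le_lt_trans; apply: sumr_ge0 => i _.
by rewrite mulr_ge0 // divr_ge0 // ltW.
Qed.

(* Otherwise the constant vector [eps] is separated from [excess_upper] by nonnegative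
   weights, and Jensen's inequality at the weighted barycenter of the [q i] contradicts them. *)
Lemma finite_equilibrium (eps : R) p0 : 0 < eps -> D p0 ->
  exists2 p, D p & forall i, excess i p < eps.
Proof.
move=> e0 Dp0; have [[p [d d0 [Dp hp]]]|x0_out] := pselect (excess_upper (\row_(i < n) eps)).
  by exists p => // i; have := hp i; rewrite mxE; lra.
have [mu [mu0 mu_pos]] := excess_upper_weights e0 x0_out Dp0.
have S0 : 0 < \sum_(i < n) mu i.
  rewrite lt_def sumr_ge0 // andbT; apply/negP => /eqP S0.
  have := mu_pos _ Dp0; rewrite big1 ?ltxx // => i _.
  by rewrite (psumr_eq0P (fun i _ => mu0 i) S0) // mul0r.
have [p Dp] := weighted_excess_nonpos mu0 S0.
by rewrite leNgt mu_pos.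
Qed.

End FiniteEquilibrium.

Lemma scalar_continuousP (R : realType) (V : normedModType R) (f : V -> R) :
  scalar f -> continuous f <-> exists K : R, forall v, `|f v| <= K * `|v|.
Proof.
move=> f_lin.
pose F : {linear V -> R^o} :=
  HB.pack_for {linear V -> R^o} f (GRing.isLinear.Build R V R^o *:%R f f_lin).
rewrite -[f]/(F : V -> R) -linear_bounded_continuous linear_boundedP.
split=> [[y [_ Fy]]|[K FK]].
  by exists (Num.max y 0 + 1); apply: Fy; rewrite ltr_pwDr // le_max lexx.
by near=> r => v; apply: le_trans (FK v) _; apply: ler_wpM2r.
Unshelve. all: by end_near. Qed.

Section Thickening.
Variables (R : realType) (V : normedModType R) (C : set V) (r : R).

Definition thickening := [set u : V | exists2 c, C c & `|u - c| < r].

Lemma thickening_convex : is_convex C -> is_convex thickening.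
Proof.
move=> C_convex u v t t01 [c Cc uc] [c' Cc' vc']; case/andP: (t01) => t0 t1.
exists (t *: c + (1 - t) *: c'); first exact: C_convex.
have -> : t *: u + (1 - t) *: v - (t *: c + (1 - t) *: c') =
    t *: (u - c) + (1 - t) *: (v - c').
  by rewrite !scalerBr opprD addrACA.
apply: le_lt_trans (ler_normD _ _) _.
rewrite !normrZ (ger0_norm t0) ger0_norm ?subr_ge0 //.
have [->|t_neq0] := eqVneq t 0; first by rewrite mul0r add0r subr0 mul1r.
have tp : 0 < t by rewrite lt_def t_neq0.
have : t * `|u - c| < t * r by rewrite ltr_pM2l.
have : (1 - t) * `|v - c'| <= (1 - t) * r by rewrite ler_wpM2l ?subr_ge0 // ltW.
lra.
Qed.

Lemma thickening_open : algebraically_open thickening.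
Proof.
move=> u w [c Cc uc].
have w1 : 0 < `|w| + 1 by rewrite ltr_pwDr.
pose d := (r - `|u - c|) / (`|w| + 1).
have d0 : 0 < d by rewrite divr_gt0 // subr_gt0.
exists d => //; exists c => //.
rewrite addrAC; apply: le_lt_trans (ler_normD _ _) _.
rewrite normrZ (gtr0_norm d0).
have : d * `|w| < r - `|u - c|.
  by rewrite /d mulrAC ltr_pdivrMr // ltr_pM2l ?subr_gt0 // ltrDl.
lra.
Qed.

Lemma gauge_thickening_le c0 v : C c0 -> 0 < r -> v != 0 ->
  gauge thickening c0 v <= 2 / r * `|v|.
Proof.
move=> Cc0 r0 v0; have nv : 0 < `|v| by rewrite normr_gt0.
have t0 : 0 < 2 / r * `|v| by rewrite mulr_gt0 // divr_gt0.
apply: ge_inf; first by exists 0 => t [t_gt0 _]; exact: ltW.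
split => //; exists c0 => //; rewrite addrAC subrr add0r normrZ.
rewrite invfM ger0_norm; last by rewrite mulr_ge0 // invr_ge0 ltW // divr_gt0.
by rewrite divfK ?gt_eqF // invf_div; lra.
Qed.

End Thickening.

Lemma separation_far_convex (R : realType) (V : normedModType R) (C : set V) (c0 z : V) (r : R) :
  0 < r -> is_convex C -> C c0 -> (forall c, C c -> r <= `|c - z|) ->
  exists l : V -> R, is_dual l /\ exists2 d, 0 < d & forall c, C c -> l c <= l z - d.
Proof.
move=> r0 C_convex Cc0 C_far.
have r20 : 0 < r / 2 by rewrite divr_gt0.
set U := thickening C (r / 2).
have U_c0 : U c0 by exists c0; rewrite // subrr normr0.
have U_z : ~ U z by move=> [c Cc zc]; have := C_far _ Cc; rewrite distrC; lra.
have [l [l_lin l_lt l_le]] := separation_open_convex (@thickening_convex _ _ C (r / 2) C_convex)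
  (@thickening_open _ _ C (r / 2)) U_c0 U_z.
have l_bound v : l v <= 2 / (r / 2) * `|v|.
  have [->|v0] := eqVneq v 0; first by rewrite scalar_form0 // normr0 mulr0.
  exact: le_trans (l_le v) (gauge_thickening_le Cc0 r20 v0).
have l_cont : continuous l.
  apply/(scalar_continuousP l_lin); exists (2 / (r / 2)) => v.
  by rewrite ler_norml l_bound andbT -lerNl -normrN -(scalar_formN l_lin) l_bound.
exists l; split=> //.
pose w := z - c0; have lw : 0 < l w by rewrite (scalar_formB l_lin) subr_gt0 l_lt.
have w1 : 0 < `|w| + 1 by rewrite ltr_pwDr.
pose s := r / 4 / (`|w| + 1); have s0 : 0 < s by rewrite !divr_gt0.
exists (s * l w); first exact: mulr_gt0.
move=> c Cc; have : U (c + s *: w).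
  exists c => //; rewrite addrAC subrr add0r normrZ (gtr0_norm s0).
  have : s * `|w| <= r / 4 by rewrite /s mulrAC ler_pdivrMr // ler_pM2l ?divr_gt0 // lerDl.
  lra.
by move/l_lt; rewrite (scalar_formD l_lin) (scalar_formZ l_lin); lra.
Qed.

Lemma ultra_map (T U : Type) (f : T -> U) (G : set_system T) :
  UltraFilter G -> UltraFilter (f @ G).
Proof.
move=> G_ultra; split=> [|H H_proper fG_H]; first exact: fmap_proper_filter.
rewrite predeqE => A; split=> [HA|]; last exact: fG_H.
have [//|GnA] := in_ultra_setVsetC (f @^-1` A) G_ultra.
have /filter_ex [y [Ay nAy]] : H (A `&` ~` A) by apply: filterI => //; exact: fG_H.
by [].
Qed.

Lemma ultra_bounded_cvg (R : realType) (T : Type) (G : set_system T) (h : T -> R) (K : R) :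
  UltraFilter G -> G [set t | `|h t| <= K] -> cvg (h @ G).
Proof.
move=> G_ultra GK; have := @segment_compact R (- K) K.
rewrite compact_ultra => /(_ _ (ultra_map h G_ultra)) [].
  suff : G [set t | h t \in `[- K, K]] by [].
  by apply: filterS GK => t; rewrite /= in_itv /= -ler_norml.
by move=> l [_ hl]; apply/cvg_ex; exists l.
Qed.

Lemma scalar_unit_bound (R : realType) (V : normedModType R) (f : V -> R) (M : R) :
  scalar f -> (forall x, `|x| <= 1 -> `|f x| <= M) -> forall x, `|f x| <= M * `|x|.
Proof.
move=> f_lin fM x; have [->|x0] := eqVneq x 0; first by rewrite scalar_form0 // !normr0 mulr0.
have nx : 0 < `|x| by rewrite normr_gt0.
have := fM (`|x|^-1 *: x); rewrite normfZV // lexx (scalar_formZ f_lin) normrM.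
rewrite normfV normr_id => /(_ isT) h.
by have := ler_wpM2r (ltW nx) h; rewrite mulrAC mulVf ?gt_eqF // mul1r.
Qed.

Definition weakly_cvg (R : realType) (T : Type) (X : normedModType R)
    (G : set_system T) (pi : T -> X) (x : X) :=
  forall f : X -> R, is_dual f -> f \o pi @ G --> f x.

(* The limits of the bounded real functions [f \o pi] along [G] form a bounded linear
   functional on the dual, which reflexivity represents by a point. *)
Lemma reflexive_weakly_cvg (R : realType) (T : Type) (X : normedModType R)
    (G : set_system T) (pi : T -> X) (M : R) :
  UltraFilter G -> reflexive_space X -> G [set t | `|pi t| <= M] ->
  exists x, weakly_cvg G pi x.
Proof.
move=> G_ultra X_refl GM.
have f_cvg f : is_dual f -> cvg (f \o pi @ G).
  move=> [f_lin f_cont]; have [K fK] := (scalar_continuousP f_lin).1 f_cont.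
  apply: (@ultra_bounded_cvg _ _ _ _ (`|K| * M)) => //; apply: filterS GM => t /= piM.
  apply: le_trans (fK _) _; apply: le_trans (ler_wpM2r (normr_ge0 _) (ler_norm K)) _.
  exact: ler_wpM2l.
pose Phi (f : X -> R) := lim (f \o pi @ G).
have [x Phi_x] : exists x : X, forall f, is_dual f -> Phi f = f x.
  apply: X_refl => [a f g f_dual g_dual|].
    apply: norm_cvg_lim; exact: cvgD (cvgMl_tmp (a := a) (f_cvg _ f_dual)) (f_cvg _ g_dual).
  exists M => f f_dual M' fM'.
  have M'0 : 0 <= M' by apply: le_trans (normr_ge0 (f 0)) (fM' 0 _); rewrite normr0.
  rewrite /Phi -lim_norm; last exact: f_cvg.
  apply: limr_le; first exact: is_cvg_norm (f_cvg _ f_dual).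
  apply: filterS GM => t /= piM; rewrite mulrC.
  exact: le_trans (scalar_unit_bound f_dual.1 fM' _) (ler_wpM2l M'0 piM).
by exists x => f f_dual; rewrite -Phi_x //; exact: f_cvg.
Qed.

Lemma weakly_cvg_pair (R : realType) (X Y : normedModType R) (G : set_system (X * Y))
    (x : X) (y : Y) : Filter G ->
  weakly_cvg G fst x -> weakly_cvg G snd y -> weakly_cvg G id (x, y).
Proof.
move=> G_filter Gx Gy l [l_lin l_cont].
have [K lK] := (scalar_continuousP l_lin).1 l_cont.
pose f1 (u : X) := l (u, 0); pose f2 (v : Y) := l (0, v).
have f1_dual : is_dual f1.
  have f1_lin : scalar f1.
    move=> c u v; rewrite /f1 -(scalar_formZ l_lin) -(scalar_formD l_lin); congr l.
    by change ((c *: u + v, 0) = (c *: u + v, c *: (0 : Y) + 0)); rewrite scaler0 addr0.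
  split => //; apply/(scalar_continuousP f1_lin); exists K => u.
  by have := lK (u, 0); rewrite prod_normE /= normr0 (max_idPl (normr_ge0 _)).
have f2_dual : is_dual f2.
  have f2_lin : scalar f2.
    move=> c u v; rewrite /f2 -(scalar_formZ l_lin) -(scalar_formD l_lin); congr l.
    by change ((0, c *: u + v) = (c *: (0 : X) + 0, c *: u + v)); rewrite scaler0 addr0.
  split => //; apply/(scalar_continuousP f2_lin); exists K => v.
  by have := lK (0, v); rewrite prod_normE /= normr0 (max_idPr (normr_ge0 _)).
have l_split (p : X * Y) : l p = f1 p.1 + f2 p.2.
  case: p => u v; rewrite /f1 /f2 -(scalar_formD l_lin); congr l.
  by change ((u, v) = (u + 0, 0 + v)); rewrite addr0 add0r.
rewrite (l_split (x, y)) (_ : l \o id = (f1 \o fst) + (f2 \o snd)).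
  exact: cvgD (Gx _ f1_dual) (Gy _ f2_dual).
by apply/funext => p; rewrite /= l_split.
Qed.

Lemma fin_num_addr_le (R : realType) (x : \bar R) (a c : R) :
  x != -oo%E -> (x + a%:E <= c%:E)%E -> x \is a fin_num /\ fine x + a <= c.
Proof. by case: x => [r| |] //= _; rewrite lee_fin. Qed.

Lemma nfin_num_pinfty (R : realType) (x : \bar R) :
  x != -oo%E -> x \isn't a fin_num -> x = +oo%E.
Proof. by case: x. Qed.

Definition econvex (R : realType) (V : lmodType R) (psi : V -> \bar R) :=
  forall (t : R) (u v : V), 0 <= t <= 1 ->
    (psi (t *: u + (1 - t) *: v)%R <= t%:E * psi u + (1 - t)%:E * psi v)%E.

Section ConvexExtendedFunctions.
Variables (R : realType) (V : lmodType R) (psi : V -> \bar R).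
Hypotheses (psi_convex : econvex psi) (psi_ninfty : forall p, psi p != -oo%E).

Let D := [set p | psi p \is a fin_num].

Let fine_convex t u v : 0 <= t <= 1 -> D u -> D v ->
  D (t *: u + (1 - t) *: v) /\
  fine (psi (t *: u + (1 - t) *: v)) <= t * fine (psi u) + (1 - t) * fine (psi v).
Proof.
move=> t01 fu fv; have := psi_convex u v t01.
rewrite -(fineK fu) -(fineK fv) -!EFinM -EFinD -[X in (X <= _)%E]adde0 => h.
by have := fin_num_addr_le (psi_ninfty _) h; rewrite addr0.
Qed.

Lemma econvex_dom_convex : is_convex [set p | psi p \is a fin_num].
Proof. by move=> u v t t01 fu fv; have [] := fine_convex t01 fu fv. Qed.

Lemma econvex_fine : convex_on [set p | psi p \is a fin_num] (fine \o psi).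
Proof. by move=> u v t t01 fu fv; have [] := fine_convex t01 fu fv. Qed.

Lemma econvex_sublevel (l : V -> R) (c : R) : scalar l ->
  is_convex [set p | (psi p + (l p)%:E <= c%:E)%E].
Proof.
move=> l_lin u v t t01 hu hv; case/andP: (t01) => t0 t1.
have [fu hu'] := fin_num_addr_le (psi_ninfty u) hu.
have [fv hv'] := fin_num_addr_le (psi_ninfty v) hv.
have [fw fw_le] := fine_convex t01 fu fv.
rewrite /= -(fineK fw) -EFinD lee_fin (scalar_formD l_lin) !(scalar_formZ l_lin); nra.
Qed.

End ConvexExtendedFunctions.

Lemma lower_semicontinuousD_continuous (R : realType) (Z : topologicalType)
    (psi : Z -> \bar R) (g : Z -> R) :
  lower_semicontinuous psi -> continuous g ->
  lower_semicontinuous (fun p => psi p + (g p)%:E)%E.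
Proof.
move=> psi_lsc g_cont x a a_lt.
have [b [b_lt ab]] : exists b, (b%:E < psi x)%E /\ a - b < g x.
  move: a_lt; case: (psi x) => [r| |] //= a_lt.
    exists ((r + a - g x) / 2); rewrite lte_fin; move: a_lt; rewrite lte_fin; lra.
  by exists (a - g x + 1); split; [rewrite ltry|lra].
have [V1 V1x V1b] := psi_lsc x b b_lt.
have V2x : \forall y \near x, a - b < g y.
  have := g_cont x; move/cvgrPdist_lt/(_ (g x - (a - b))); rewrite subr_gt0 => /(_ ab).
  by apply: filterS => y; rewrite ltr_distlC; lra.
exists (V1 `&` [set y | a - b < g y]); first exact: filterI.
move=> y [/V1b psi_y g_y]; rewrite -[a](subrK b) addrC EFinD.
exact: lteD.
Qed.

(* If [c < psi z], lower semicontinuity keeps the sublevel set at positive distance from [z],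
   so a continuous linear form separates them, contradicting weak convergence along [G]. *)
Lemma weakly_lsc (R : realType) (Z : normedModType R) (psi : Z -> \bar R)
    (G : set_system Z) (z : Z) (c : R) :
  ProperFilter G -> lower_semicontinuous psi ->
  is_convex [set p | (psi p <= c%:E)%E] ->
  weakly_cvg G id z -> G [set p | (psi p <= c%:E)%E] -> (psi z <= c%:E)%E.
Proof.
move=> G_proper psi_lsc C_convex Gz GC; rewrite leNgt; apply/negP => c_lt.
set C := [set p | (psi p <= c%:E)%E] in C_convex GC.
have [b [cb b_lt]] : exists b, c < b /\ (b%:E < psi z)%E.
  move: c_lt; case: (psi z) => [r| |] //= c_lt.
    by exists ((c + r) / 2); rewrite lte_fin; move: c_lt; rewrite lte_fin; lra.
  by exists (c + 1); split; [lra|rewrite ltry].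
have [V /nbhs_normP [eps /= eps0 epsV] Vb] := psi_lsc z b b_lt.
have C_far p : C p -> eps <= `|p - z|.
  move=> Cp; rewrite leNgt; apply/negP => pz; have := Vb p (epsV _ _).
  by rewrite /= distrC => /(_ pz) b_psi; have := lt_le_trans b_psi Cp; rewrite lte_fin; lra.
have [c0 Cc0] := filter_ex GC.
have [l [l_dual [d d0 l_le]]] := separation_far_convex eps0 C_convex Cc0 C_far.
have := Gz l l_dual; move/cvgrPdist_lt/(_ d d0) => Gl.
have [p [/= lp Cp]] := filter_ex (filterI Gl GC).
by have := l_le p Cp; move: lp; rewrite ltr_distlC; lra.
Qed.

Section Equilibrium.
Variables (R : realType) (X Y : normedModType R) (phi : X * Y -> \bar R).
Variable L : X * Y -> X * Y -> R.
Hypotheses (X_refl : reflexive_space X) (Y_refl : reflexive_space Y).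
Hypotheses (phi_ninfty : forall p, phi p != -oo%E) (phi_convex : econvex phi).
Hypotheses (phi_lsc : lower_semicontinuous phi) (phi0 : phi 0 \is a fin_num).
Hypothesis phi_coercive : forall M : R, exists r : R, forall x y,
  r < `|x| + `|y| -> ((M * (`|x| + `|y|))%:E <= phi (x, y))%E.
Hypotheses (L_dual : forall q, is_dual (L ^~ q)) (L_scalarr : forall p, scalar (L p)).
Hypothesis L_diag : forall p, L p p = 0.

Lemma sublevel_bounded : exists M, forall p,
  (phi p <= (fine (phi 0) + 1)%:E)%E -> `|p| <= M.
Proof.
have [r r_coer] := phi_coercive (`|fine (phi 0)| + 2).
exists (Num.max r 1) => -[x y]; rewrite -[X in (X <= _)%E]adde0 => phi_p.
have [fp {}phi_p] := fin_num_addr_le (phi_ninfty _) phi_p.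
apply: (@le_trans _ _ (`|x| + `|y|)).
  rewrite prod_normE /= ge_max; have := normr_ge0 x; have := normr_ge0 y.
  by move=> ? ?; apply/andP; split; lra.
rewrite leNgt; apply/negP => big.
have r_lt : r < `|x| + `|y| by apply: le_lt_trans big; rewrite le_max lexx.
have one_lt : 1 < `|x| + `|y| by apply: le_lt_trans big; rewrite le_max lexx orbT.
have := r_coer _ _ r_lt; rewrite -(fineK fp) lee_fin.
have := ler_norm (fine (phi 0)); have := normr_ge0 (fine (phi 0)); nra.
Qed.

(* Indexed by (finite set of test points, tolerance), so that they form a filter base. *)
Definition approx_equilibria (M : R) (i : seq (X * Y) * R) := [set p | `|p| <= M /\
  forall q, q \in i.1 -> (phi p + (L p q)%:E <= phi q + i.2%:E)%E].

Lemma approx_equilibria_neq0 M Q e : 0 < e ->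
  (forall p, (phi p <= (fine (phi 0) + 1)%:E)%E -> `|p| <= M) ->
  approx_equilibria M (Q, e) !=set0.
Proof.
move=> e0 M_bnd; pose D := [set p | phi p \is a fin_num].
pose Q' := [seq q <- 0 :: Q | `[< D q >]].
have DQ (j : 'I_(size Q')) : D (nth 0 Q' j).
  by have := mem_nth 0 (ltn_ord j); rewrite mem_filter => /andP[/asboolP].
have em : 0 < Num.min e 1 by rewrite lt_min e0 ltr01.
have [p Dp p_exc] := finite_equilibrium (econvex_dom_convex phi_convex phi_ninfty)
  (econvex_fine phi_convex phi_ninfty) (fun q => (L_dual q).1) L_scalarr L_diag DQ em phi0.
have p_le q : q \in 0 :: Q -> D q -> fine (phi p) + L p q - fine (phi q) < Num.min e 1.
  move=> qQ Dq; have qQ' : q \in Q' by rewrite mem_filter qQ andbT; apply/asboolP.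
  have iq : (index q Q' < size Q')%N by rewrite index_mem.
  by have := p_exc (Ordinal iq); rewrite /excess /= nth_index.
exists p; split=> [|q qQ].
  apply: M_bnd; rewrite -(fineK Dp) lee_fin.
  have := p_le 0 (mem_head _ _) phi0.
  by rewrite (scalar_form0 (L_scalarr p)) lt_min => /andP[_]; lra.
have [Dq|nDq] := boolP (phi q \is a fin_num); last first.
  by rewrite (nfin_num_pinfty (phi_ninfty q) nDq) addye // leey.
have qQ0 : q \in 0 :: Q by rewrite in_cons qQ orbT.
have := p_le q qQ0 Dq; rewrite lt_min => /andP[pq _].
by rewrite /= -(fineK Dp) -(fineK Dq) -!EFinD lee_fin; lra.
Qed.

Theorem equilibrium : exists2 pb, phi pb \is a fin_num &
  forall q, (phi pb + (L pb q)%:E <= phi q)%E.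
Proof.
have [M M_bnd] := sublevel_bounded.
pose F := filter_from [set i : seq (X * Y) * R | 0 < i.2] (approx_equilibria M).
have F_proper : ProperFilter F.
  apply: filter_from_proper; last by move=> [Q e] /= e0; exact: approx_equilibria_neq0.
  apply: filter_from_filter; first by exists ([::], 1) => /=; exact: ltr01.
  move=> [Q1 e1] [Q2 e2] /= e10 e20; exists (Q1 ++ Q2, Num.min e1 e2) => /=.
    by rewrite lt_min e10 e20.
  move=> p [pM p_le]; split; split => // q qQ; apply: le_trans (p_le q _) _;
    by rewrite ?mem_cat ?qQ ?orbT // leeD2l // lee_fin ge_min lexx ?orbT.
have [G [G_ultra FG]] := ultraFilterLemma F_proper.
have GM : G [set p | `|p| <= M] by apply: FG; exists ([::], 1) => //= p [].
have G1 : G [set p | `|p.1| <= M].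
  by apply: filterS GM => p; apply: le_trans; rewrite prod_normE le_max lexx.
have G2 : G [set p | `|p.2| <= M].
  by apply: filterS GM => p; apply: le_trans; rewrite prod_normE le_max lexx orbT.
have [xb Gx] := reflexive_weakly_cvg G_ultra X_refl G1.
have [yb Gy] := reflexive_weakly_cvg G_ultra Y_refl G2.
have G_filter : Filter G by apply: filter_filter.
have Gpb := weakly_cvg_pair G_filter Gx Gy; set pb := (xb, yb) in Gpb.
have pb_le q e : 0 < e -> phi q \is a fin_num ->
    (phi pb + (L pb q)%:E <= (fine (phi q) + e)%:E)%E.
  move=> e0 Dq; apply: (@weakly_lsc _ _ (fun p => phi p + (L p q)%:E)%E _ _ _ _ _ _ Gpb).
  - exact: lower_semicontinuousD_continuous phi_lsc (L_dual q).2.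
  - exact (econvex_sublevel phi_convex phi_ninfty (L_dual q).1).
  - apply: FG; exists ([:: q], e) => //= p [_ /(_ q (mem_head _ _))].
    by rewrite EFinD fineK.
have Dpb : phi pb \is a fin_num.
  have := pb_le 0 1 ltr01 phi0; rewrite (scalar_form0 (L_scalarr pb)).
  by move=> /(fin_num_addr_le (phi_ninfty pb)) [].
exists pb => // q; have [Dq|nDq] := boolP (phi q \is a fin_num); last first.
  by rewrite (nfin_num_pinfty (phi_ninfty q) nDq) leey.
rewrite -(fineK Dpb) -(fineK Dq) -EFinD lee_fin; apply/ler_addgt0Pr => e e0.
by have := pb_le q e e0 Dq; rewrite -(fineK Dpb) -EFinD lee_fin.
Qed.

End Equilibrium.

Section Conjugate.
Variables (R : realType) (X Y : normedModType R) (phi : X * Y -> \bar R).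
Hypothesis phi_ninfty : forall p, phi p != -oo%E.

Lemma conjugate_ge (f : X -> R) (g : Y -> R) q :
  ((f q.1 + g q.2)%:E - phi q <= conjugate phi f g)%E.
Proof. by apply: ereal_sup_ubound; exists q. Qed.

Lemma fenchel_young (f : X -> R) (g : Y -> R) p : phi 0 \is a fin_num ->
  ((f p.1 + g p.2)%:E <= phi p + conjugate phi f g)%E.
Proof.
move=> phi0; have := conjugate_ge f g p; have := conjugate_ge f g 0.
rewrite -(fineK phi0) -EFinB; move: (phi_ninfty p).
case: (phi p) => [v| |] //= _; case: (conjugate phi f g) => [s| |] //= _ h.
- by move: h; rewrite -!EFinD !lee_fin; lra.
all: by rewrite ?addey ?addye ?leey.
Qed.

Lemma conjugate_subdiff (f : X -> R) (g : Y -> R) pb :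
  scalar (fun q : X * Y => f q.1 + g q.2) -> in_subdiff phi pb f g ->
  conjugate phi f g = ((f pb.1 + g pb.2)%:E - phi pb)%E.
Proof.
move=> fg_lin [Dpb pb_sub]; apply/eqP; rewrite eq_le conjugate_ge andbT.
apply: ge_ereal_sup => _ [q _ <-].
have : (phi pb + ((fun q : X * Y => f q.1 + g q.2) (q - pb))%:E <= phi q)%E := pb_sub q.
rewrite (scalar_formB fg_lin) /= -(fineK Dpb); move: (phi_ninfty q).
by case: (phi q) => [v| |] //= _; rewrite ?lee_fin ?leNye //; lra.
Qed.

End Conjugate.

Lemma bounded_bilinear_boundl (R : realType) (X Y : normedModType R) (a : X -> Y -> R) :
  bounded_bilinear a -> forall y, exists2 K, 0 <= K & forall x, `|a x y| <= K * `|x|.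
Proof.
move=> [_ [_ [C aC]]] y; exists (`|C| * `|y|) => [|x]; first exact: mulr_ge0.
apply: le_trans (aC x y) _; rewrite mulrAC ler_wpM2r //.
by rewrite ler_wpM2r // ler_norm.
Qed.

Lemma bounded_bilinear_boundr (R : realType) (X Y : normedModType R) (a : X -> Y -> R) :
  bounded_bilinear a -> forall x, exists2 K, 0 <= K & forall y, `|a x y| <= K * `|y|.
Proof.
move=> [_ [_ [C aC]]] x; exists (`|C| * `|x|) => [|y]; first exact: mulr_ge0.
by apply: le_trans (aC x y) _; rewrite ler_wpM2r // ler_wpM2r // ler_norm.
Qed.

Lemma skew_adjoint_diag (R : realType) (X : normedModType R) (b : X -> X -> R) x :
  skew_adjoint b -> b x x = 0.
Proof. by case=> _ b_skew; have := b_skew x x; lra. Qed.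

Section Coupling.
Variables (R : realType) (X Y : normedModType R).
Variables (a : X -> Y -> R) (b1 : X -> X -> R) (b2 : Y -> Y -> R).
Hypotheses (a_bil : bounded_bilinear a) (b1_skew : skew_adjoint b1) (b2_skew : skew_adjoint b2).

(* The pairing of (-A^* y + B1 x, A x + B2 y) with q, where p = (x, y). *)
Definition coupling (p q : X * Y) := (- a q.1 p.2 + b1 p.1 q.1) + (a p.1 q.2 + b2 p.2 q.2).

Lemma coupling_scalarr p : scalar (coupling p).
Proof.
case: a_bil b1_skew b2_skew => [al [ar _]] [[_ [b1r _]] _] [[_ [b2r _]] _].
by move=> c u v; rewrite /coupling /= al b1r ar b2r; ring.
Qed.

Lemma coupling_diag p : coupling p p = 0.
Proof. by rewrite /coupling !skew_adjoint_diag //; lra. Qed.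

Lemma coupling_dual q : is_dual (coupling ^~ q).
Proof.
case: a_bil b1_skew b2_skew => [al [ar _]] [[b1l _] _] [[b2l _] _].
have L_lin : scalar (coupling ^~ q).
  by move=> c u v; rewrite /coupling /= ar b1l al b2l; ring.
split => //; apply/(scalar_continuousP L_lin).
have [K1 K1_0 hK1] := bounded_bilinear_boundr a_bil q.1.
have [K2 K2_0 hK2] := bounded_bilinear_boundl b1_skew.1 q.1.
have [K3 K3_0 hK3] := bounded_bilinear_boundl a_bil q.2.
have [K4 K4_0 hK4] := bounded_bilinear_boundl b2_skew.1 q.2.
exists (K1 + K2 + K3 + K4) => p.
have p1 : `|p.1| <= `|p| by rewrite prod_normE le_max lexx.
have p2 : `|p.2| <= `|p| by rewrite prod_normE le_max lexx orbT.
have := ler_wpM2l K1_0 p2; have := ler_wpM2l K2_0 p1.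
have := ler_wpM2l K3_0 p1; have := ler_wpM2l K4_0 p2.
have := hK1 p.2; have := hK2 p.1; have := hK3 p.1; have := hK4 p.2.
have := ler_normD (- a q.1 p.2 + b1 p.1 q.1) (a p.1 q.2 + b2 p.2 q.2).
have := ler_normD (- a q.1 p.2) (b1 p.1 q.1); have := ler_normD (a p.1 q.2) (b2 p.2 q.2).
rewrite normrN /coupling; lra.
Qed.

End Coupling.

Unset Implicit Arguments.

Theorem proposition4p2 (R : realType) (X Y : completeNormedModType R)
  (phi : X * Y -> \bar R) (a : X -> Y -> R) (b1 : X -> X -> R) (b2 : Y -> Y -> R) :
  reflexive_space X -> reflexive_space Y ->
  (forall p, phi p != -oo%E) ->
  convex_XY phi ->
  lower_semicontinuous phi ->
  phi (0, 0) \is a fin_num ->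
  (forall M : R, exists r : R, forall x y,
      r < `|x| + `|y| -> ((M * (`|x| + `|y|))%:E <= phi (x, y))%E) ->
  bounded_bilinear a -> skew_adjoint b1 -> skew_adjoint b2 ->
  let I := fun p : X * Y =>
    (phi p + conjugate phi (fun x' => (- a x' p.2 + b1 p.1 x')%R)
                           (fun y' => (a p.1 y' + b2 p.2 y')%R))%E in
  ereal_inf [set I p | p in [set: X * Y]] = 0%E /\
  exists pb : X * Y, I pb = 0%E /\
    in_subdiff phi pb (fun x' => - a x' pb.2 + b1 pb.1 x')
                      (fun y' => a pb.1 y' + b2 pb.2 y').
Proof.
move=> X_refl Y_refl phi_ninfty phi_convex phi_lsc phi0 phi_coercive a_bil b1_skew b2_skew I.
have [pb Dpb pb_eq] := equilibrium X_refl Y_refl phi_ninfty phi_convex phi_lsc phi0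
  phi_coercive (coupling_dual a_bil b1_skew b2_skew) (coupling_scalarr a_bil b1_skew b2_skew)
  (coupling_diag a b1_skew b2_skew).
have I_ge0 p : (0 <= I p)%E.
  have : ((coupling a b1 b2 p p)%:E <= I p)%E := fenchel_young phi_ninfty _ _ p phi0.
  by rewrite coupling_diag.
have pb_subdiff : in_subdiff phi pb (fun x' => - a x' pb.2 + b1 pb.1 x')
                                    (fun y' => a pb.1 y' + b2 pb.2 y').
  split=> // q; suff : (phi pb + (coupling a b1 b2 pb (q - pb))%:E <= phi q)%E by [].
  rewrite (scalar_formB (coupling_scalarr a_bil b1_skew b2_skew pb)).
  by rewrite coupling_diag // subr0.
have I_pb : I pb = 0%E.
  rewrite /I (conjugate_subdiff phi_ninfty (coupling_scalarr a_bil b1_skew b2_skew pb) pb_subdiff).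
  rewrite -(fineK Dpb) -EFinB -EFinD; congr EFin.
  by have := coupling_diag a b1_skew b2_skew pb; rewrite /coupling /=; lra.
split; last by exists pb.
apply/eqP; rewrite eq_le; apply/andP; split.
  by apply: ge_ereal_inf; exists (I pb); [exists pb|rewrite I_pb].
by apply: le_ereal_inf_tmp => _ [p _ <-]; exact: I_ge0.
Qed.
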